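(* Let $N=[n(i,j)]_{1\le i,j\le r}$ be a generalised Cartan matrix, $\mathfrak h$, $\alpha_1,\dots,\alpha_r$, $\mathcal A$, $F:\mathfrak h\to\mathrm{Der}(\mathcal A)$ and invertible $v_1,\dots,v_r\in\mathcal A$ with $F(H)(v_i)=\alpha_i(H)v_i$ for all $H\in\mathfrak h$ be as in the context. Suppose there exist $\delta_1,\dots,\delta_r,\delta_{-1},\dots,\delta_{-r}\in\mathrm{Im}\,F$ such that, with $\mathbf X_i=v_i\delta_i$ and $\mathbf X_{-i}=v_i^{-1}\delta_{-i}$, one has in $\mathrm{Der}(\mathcal A)$ $$[\mathbf X_i,\mathbf X_{-i}]=F(H_i)\quad(1\le i\le r),\qquad [\mathbf X_i,\mathbf X_{-j}]=0\quad(i\neq j).$$ Set $A_{ij}=\alpha_i(\delta_j)$ for $1\le i,j\le r$. Then: (i) $A_{ii}\neq 0$ for $1\le i\le r$; (ii) $\delta_{-i}=\frac{1}{A_{ii}}\bigl(-F(H_i)+\frac{1}{A_{ii}}\delta_i\bigr)$ for $1\le i\le r$; (iii) $\frac{A_{ij}}{A_{jj}}\in\{0,-1\}$ for $i\neq j$; (iv) $\frac{A_{ij}}{A_{jj}}+\frac{A_{ji}}{A_{ii}}=n(j,i)$ for all $i,j$; (v) the matrix $A'=[\frac{A_{ij}}{A_{jj}}]$ has the property that if its $(i,j)$ entry equals $-1$, then the $i$-th row and the $j$-th column of $A'$ contain no other entry equal to $-1$; (vi) if $\frac{A_{ij}}{A_{jj}}=\frac{A_{ji}}{A_{ii}}=-1$,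 then $N$ contains $\begin{pmatrix}2&-2\\-2&2\end{pmatrix}$ as a direct factor, i.e. $n(i,j)=n(j,i)=-2$ and $n(i,k)=n(k,i)=n(j,k)=n(k,j)=0$ for all $k\notin\{i,j\}$, and moreover $F(H_i)+F(H_j)=0$.
   Context: A generalised Cartan matrix is $N=[n(i,j)]_{1\le i,j\le r}$ with $n(i,j)\in\mathbb Z$, $n(i,i)=2$, $n(i,j)\le 0$ for $i\neq j$, and $n(i,j)=0\iff n(j,i)=0$. Let $s$ be the corank of $N$, let $\mathfrak h$ be the (abelian) complex Lie algebra with basis $H_1,\dots,H_{r+s}$, and let $\alpha_1,\dots,\alpha_r\in\mathfrak h^*$ be linearly independent with $\alpha_j(H_i)=n(i,j)$ for $1\le i,j\le r$; put $Z=\bigcap_{i}\ker\alpha_i$. $\mathcal A$ is a complex commutative algebra, $\mathrm{Der}(\mathcal A)$ its Lie algebra of derivations (commutator bracket); for $a\in\mathcal A$, $D\in\mathrm{Der}(\mathcal A)$, $aD$ denotes the derivation $b\mapsto aD(b)$. $F:\mathfrak h\to\mathrm{Der}(\mathcal A)$ is a Lie algebra homomorphism and $v_1,\dots,v_r\in\mathcal A$ are invertible with $F(H)(v_i)=\alpha_i(H)v_i$. Then $\ker F\subseteq Z$, so each $\alpha_i$ induces a well-defined linear form on $\mathrm{Im}\,F$, still denoted $\alpha_i$, via $\alpha_i(F(H))=\alpha_i(H)$. *)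

From HB Require Import structures.
From mathcomp Require Import all_boot all_order all_algebra.
From mathcomp Require Import complex.
From mathcomp Require Import reals.
Set Implicit Arguments. Unset Strict Implicit. Unset Printing Implicit Defensive.
Import Order.TTheory GRing.Theory Num.Theory.
Local Open Scope ring_scope.

Definition gen_cartan (r : nat) (N : 'M[int]_r) : Prop :=
  [/\ forall i, N i i = 2,
      forall i j, i != j -> N i j <= 0
    & forall i j, N i j = 0 <-> N j i = 0].

Definition is_derivation (C : comNzRingType) (A : comAlgType C) (D : A -> A) : Prop :=
  (forall (c : C) (x y : A), D (c *: x + y) = c *: D x + D y) /\
  (forall x y : A, D (x * y) = x * D y + y * D x).

Definition der_bracket (T : pzRingType) (D E : T -> T) : T -> T :=
  fun x => D (E x) - E (D x).

Definition der_lmul (T : pzRingType) (a : T) (D : T -> T) : T -> T :=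
  fun x => a * D x.

(* h = C^(r+s) with basis H_1..H_(r+s) (row vectors); a linear form
   alpha_j on h is encoded by the j-th column of a matrix al, so that
   alpha_j(H) = (H *m al) 0 j. *)
Definition lin_form (C : pzRingType) (m r : nat) (al : 'M[C]_(m, r)) (j : 'I_r)
  (H : 'rV[C]_m) : C := (H *m al) 0 j.

Definition basisH {C : pzRingType} {m : nat} (i : 'I_m) : 'rV[C]_m :=
  delta_mx 0 i.

(* The Leibniz rule and F(H) v_i = alpha_i(H) v_i give, for delta = F G and delta' = F G',
     [v_i delta, v_j^-1 delta'] = v_i v_j^-1 F(- alpha_j(G) G' - alpha_i(G') G),
   so each bracket relation identifies F(H_i), resp. 0, with F of an explicit combination
   of the G's.  As v_k is invertible, alpha_k(H) is determined by F(H); reading the relations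
   through alpha_k gives, for p_kj = alpha_k(delta_j) and q_kj = alpha_k(delta_-j),
     n(i,k) = - p_ii q_ki - q_ii p_ki,      p_ji q_kj + q_ij p_ki = 0   (i <> j).
   The case k = i of the first gives p_ii q_ii = -1.  Eliminating q, the ratios
   a_ij = p_ij / p_jj satisfy  a_ji (a_kj - n(j,k)) + (a_ij - n(j,i)) a_ki = 0  for i <> j;
   its instances k = i and k = j force a_ij + a_ji = n(j,i) and a_ij in {0, -1}, and the
   remaining claims are further instances of the same identity. *)

From HB Require Import structures.
From mathcomp Require Import all_boot all_order all_algebra.
From mathcomp Require Import complex reals.
From mathcomp Require Import ring.
Import Order.TTheory GRing.Theory Num.Theory.
Local Open Scope ring_scope.

Section WeightVectors.

Context {K : fieldType} {A : comAlgType K} {V : lmodType K} {I : Type}.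
Context {F : V -> A -> A} {v vinv : I -> A} {alpha : I -> V -> K}.
Hypothesis F_linear : forall c H H' x, F (c *: H + H') x = c *: F H x + F H' x.
Hypothesis F_der : forall H, is_derivation (F H).
Hypothesis F_bracket : forall H H' x, der_bracket (F H) (F H') x = F 0 x.
Hypothesis v_inv : forall i, v i * vinv i = 1.
Hypothesis F_weight : forall H i, F H (v i) = alpha i H *: v i.

Lemma F0 x : F 0 x = 0.
Proof.
by have := F_linear 1 0 0 x; rewrite !scale1r addr0 -{1}[F 0 x]addr0 => /addrI ->.
Qed.

Lemma FZ c H x : F (c *: H) x = c *: F H x.
Proof. by have := F_linear c H 0 x; rewrite !addr0 F0 addr0. Qed.

Lemma F_commute H H' x : F H (F H' x) = F H' (F H x).
Proof. by apply/eqP; rewrite -subr_eq0; have := F_bracket H H' x; rewrite F0 => <-. Qed.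

Lemma FM H x y : F H (x * y) = x * F H y + y * F H x.
Proof. exact: (F_der H).2. Qed.

Lemma F1 H : F H 1 = 0.
Proof. by have := FM H 1 1; rewrite !mul1r -{1}[F H 1]addr0 => /addrI ->. Qed.

Lemma vinv_v i : vinv i * v i = 1.
Proof. by rewrite mulrC. Qed.

(* Stated with [in_alg] rather than [a%:A = a *: 1], so that rewriting terminates and
   [ring] sees the scalars through a ring morphism. *)
Lemma scale_in_alg (a : K) (x : A) : a *: x = in_alg A a * x.
Proof. by rewrite mulr_algl. Qed.

Lemma F_weight_inv H i : F H (vinv i) = - (alpha i H *: vinv i).
Proof.
have := FM H (v i) (vinv i); rewrite v_inv F1 F_weight => /esym/eqP.
rewrite addr_eq0 -scalerAr vinv_v => /eqP Fv.
by rewrite -[LHS]mul1r -(vinv_v i) -mulrA Fv mulrN -scalerAr mulr1.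
Qed.

Lemma weight_inj i (a b : K) : a *: v i = b *: v i -> a = b.
Proof.
move=> /(congr1 ( *%R^~ (vinv i))); rewrite -!scalerAl v_inv.
exact: (fmorph_inj (in_alg A)).
Qed.

Lemma weight_linear i c H H' : alpha i (c *: H + H') = c * alpha i H + alpha i H'.
Proof.
by apply: (@weight_inj i); rewrite -F_weight F_linear !F_weight scalerDl scalerA.
Qed.

Lemma weight_congr {G G'} i : (forall x, F G x = F G' x) -> alpha i G = alpha i G'.
Proof. by move=> FG; apply: (@weight_inj i); rewrite -!F_weight. Qed.

Lemma der_bracket_lmul i j G G' x :
  der_bracket (der_lmul (v i) (F G)) (der_lmul (vinv j) (F G')) x =
  v i * vinv j * F ((- alpha j G) *: G' + (- alpha i G') *: G) x.
Proof.
rewrite /der_bracket /der_lmul !FM F_weight_inv F_weight F_commute F_linear FZ.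
rewrite !scale_in_alg; ring.
Qed.

Lemma weight0 i : alpha i 0 = 0.
Proof. by apply: (@weight_inj i); rewrite -F_weight F0 scale0r. Qed.

Lemma weightZ i c H : alpha i (c *: H) = c * alpha i H.
Proof. by rewrite -[c *: H]addr0 weight_linear weight0 addr0. Qed.

Lemma bracket_diag_F {i G G' H} :
  (forall x, der_bracket (der_lmul (v i) (F G)) (der_lmul (vinv i) (F G')) x = F H x) ->
  forall x, F H x = F ((- alpha i G) *: G' + (- alpha i G') *: G) x.
Proof. by move=> br x; rewrite -br der_bracket_lmul v_inv mul1r. Qed.

Lemma bracket_offdiag_F {i j G G'} :
  (forall x, der_bracket (der_lmul (v i) (F G)) (der_lmul (vinv j) (F G')) x = 0) ->
  forall x, F ((- alpha j G) *: G' + (- alpha i G') *: G) x = 0.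
Proof.
move=> br x; have vK : v j * vinv i * (v i * vinv j) = 1.
  by rewrite [v j * _]mulrC mulrACA vinv_v v_inv mulr1.
by rewrite -[LHS]mul1r -vK -mulrA -der_bracket_lmul br mulr0.
Qed.

Lemma weight_bracket_diag {i G G' H} :
  (forall x, der_bracket (der_lmul (v i) (F G)) (der_lmul (vinv i) (F G')) x = F H x) ->
  forall k, alpha k H = - (alpha i G * alpha k G') - alpha i G' * alpha k G.
Proof.
by move=> /bracket_diag_F FH k; rewrite (weight_congr k FH) weight_linear weightZ !mulNr.
Qed.

Lemma weight_bracket_offdiag {i j G G'} :
  (forall x, der_bracket (der_lmul (v i) (F G)) (der_lmul (vinv j) (F G')) x = 0) ->
  forall k, alpha j G * alpha k G' + alpha i G' * alpha k G = 0.
Proof.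
move=> /bracket_offdiag_F FK k.
have /(weight_congr k) : forall x, F ((- alpha j G) *: G' + (- alpha i G') *: G) x = F 0 x.
  by move=> x; rewrite FK F0.
by rewrite weight_linear weightZ weight0 !mulNr -opprD => /eqP; rewrite oppr_eq0 => /eqP.
Qed.

Lemma F_solve_diag {H G M c x} : c != 0 ->
  F H x = F ((- c) *: M + c^-1 *: G) x -> F M x = c^-1 *: (- F H x + c^-1 *: F G x).
Proof. by move=> c0 ->; rewrite F_linear FZ opprD subrK scaleNr opprK scalerK. Qed.

Lemma F_solve_pair {H G G' M c d x} : c != 0 -> d != 0 ->
  F H x = F ((- d) *: M + d^-1 *: G') x -> F (c *: M + (- d^-1) *: G) x = 0 ->
  F H x = d^-1 *: F G' x - c^-1 *: F G x.
Proof.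
move=> c0 d0 ->; rewrite !F_linear !FZ => /eqP; rewrite addr_eq0 scaleNr opprK => /eqP cM.
have -> : F M x = c^-1 *: (d^-1 *: F G x) by rewrite -cM scalerK.
rewrite !scalerA addrC (_ : - d * (c^-1 * d^-1) = - c^-1) ?scaleNr //; field.
by apply/andP.
Qed.

Lemma F_pair_sum_eq0 {Hi Hj Gi Gj Mi Mj c d x} : c != 0 -> d != 0 ->
  F Hi x = F ((- c) *: Mi + c^-1 *: Gi) x -> F Hj x = F ((- d) *: Mj + d^-1 *: Gj) x ->
  F (c *: Mj + (- d^-1) *: Gi) x = 0 -> F (d *: Mi + (- c^-1) *: Gj) x = 0 ->
  F Hi x + F Hj x = 0.
Proof.
move=> c0 d0 FHi FHj Mj0 Mi0.
by rewrite (F_solve_pair d0 c0 FHi Mi0) (F_solve_pair c0 d0 FHj Mj0) addrA subrK subrr.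
Qed.

End WeightVectors.

Section CartanRelations.

Context {K : fieldType} {I : eqType} {p q n : I -> I -> K}.
Hypothesis two_neq0 : 2 != 0 :> K.
Hypothesis n_diag : forall i, n i i = 2.
Hypothesis rel_diag : forall i k, n i k = - (p i i * q k i) - q i i * p k i.
Hypothesis rel_offdiag : forall i j, i != j -> forall k, p j i * q k j + q i j * p k i = 0.

Definition ratio i j := p i j / p j j.

Lemma oner_neqN1 : 1 != -1 :> K.
Proof. by rewrite -addr_eq0. Qed.

Lemma pq_diag i : p i i * q i i = -1.
Proof.
have := rel_diag i i; rewrite n_diag => two_eq.
have : 2 * (p i i * q i i + 1) = 0.
  by rewrite mulrDr mulr1 {2}two_eq; ring.
by move/eqP; rewrite mulf_eq0 (negbTE two_neq0) addr_eq0 => /eqP.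
Qed.

Lemma p_diag_neq0 i : p i i != 0.
Proof. by apply: contra_eqN (pq_diag i) => /eqP ->; rewrite mul0r eq_sym oppr_eq0 oner_eq0. Qed.

Lemma q_diag i : q i i = - (p i i)^-1.
Proof. by apply: (mulfI (p_diag_neq0 i)); rewrite pq_diag mulrN mulfV ?p_diag_neq0. Qed.

Lemma q_ratio k j : q k j = (ratio k j - n j k) / p j j.
Proof. by rewrite /ratio rel_diag q_diag; field; exact: p_diag_neq0. Qed.

Lemma ratio_diag i : ratio i i = 1.
Proof. exact/divff/p_diag_neq0. Qed.

Lemma ratio_rel i j k : i != j ->
  ratio j i * (ratio k j - n j k) + (ratio i j - n j i) * ratio k i = 0.
Proof.
move=> ij; have := rel_offdiag i j ij k; rewrite !q_ratio.
have := p_diag_neq0 i; have := p_diag_neq0 j; rewrite /ratio.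
move=> pj pi h; rewrite -[RHS](mulr0 (p j j / p i i)) -h; field; exact/andP.
Qed.

Lemma ratio_sum i j : ratio i j + ratio j i = n j i.
Proof.
have [<- | ij] := eqVneq i j; first by rewrite ratio_diag n_diag.
have := ratio_rel i j i ij; have := ratio_rel i j j ij; rewrite !ratio_diag n_diag.
move=> Ej Ei; apply/eqP; rewrite -subr_eq0; apply/eqP.
by rewrite -[RHS](subrr 0) -{1}Ei -Ej; ring.
Qed.

Lemma ratio_offdiag i j : i != j -> ratio i j = 0 \/ ratio i j = -1.
Proof.
rewrite eq_sym => ji; have := ratio_rel j i j ji; rewrite ratio_diag -(ratio_sum j i) => E.
have /eqP : ratio i j * (ratio i j + 1) = 0 by rewrite -[RHS]oppr0 -E; ring.
by rewrite mulf_eq0 addr_eq0 => /orP[] /eqP; [left | right].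
Qed.

Lemma ratio_neq1 {i j} : i != j -> ratio i j != 1.
Proof.
move=> /ratio_offdiag[] ->; first by rewrite eq_sym oner_eq0.
by rewrite eq_sym oner_neqN1.
Qed.

Lemma ratio_N1_neq {i j} : ratio i j = -1 -> i != j.
Proof. by apply: contra_eqN => /eqP <-; rewrite ratio_diag oner_neqN1. Qed.

Lemma ratio_rel_sum {i j} k : i != j ->
  ratio j i * (ratio k j - n j k - ratio k i) = 0.
Proof. by move=> ij; rewrite -[RHS](ratio_rel i j k ij) -(ratio_sum i j); ring. Qed.

Lemma ratio_row_N1 {i j k} : ratio i j = -1 -> ratio i k = -1 -> k = j.
Proof.
move=> rij rik; apply/eqP; apply: contraT; rewrite eq_sym => jk.
have ki : k != i by rewrite eq_sym (ratio_N1_neq rik).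
have := ratio_rel_sum j ki; rewrite rik -(ratio_sum j i) rij => E.
have /eqP : ratio j k - 1 = 0 by rewrite -[RHS]E; ring.
by rewrite subr_eq0 (negbTE (ratio_neq1 jk)).
Qed.

Lemma ratio_col_N1 {i j k} : ratio i j = -1 -> ratio k j = -1 -> k = i.
Proof.
move=> rij rkj; apply/eqP; apply: contraT => ki.
have jk : j != k by rewrite eq_sym (ratio_N1_neq rkj).
have := ratio_rel_sum i jk; rewrite rkj -(ratio_sum i k) rij => E.
have /eqP : ratio k i - 1 = 0 by rewrite -[RHS]E; ring.
by rewrite subr_eq0 (negbTE (ratio_neq1 ki)).
Qed.

Lemma ratio_N1_unique {i j} : ratio i j = -1 ->
  (forall k, k != j -> ratio i k != -1) /\ (forall k, k != i -> ratio k j != -1).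
Proof.
by move=> rij; split=> k; apply: contra_neq; [apply: ratio_row_N1 | apply: ratio_col_N1].
Qed.

Lemma ratio_pair_N1 {i j} : ratio i j = -1 -> ratio j i = -1 ->
  [/\ n i j = -2, n j i = -2 & forall k, n i k + n j k = 0].
Proof.
move=> rij rji; have ij := ratio_N1_neq rij; have ji := ratio_N1_neq rji.
split; [by rewrite -ratio_sum rij rji; ring | by rewrite -ratio_sum rij rji; ring |].
move=> k; have := ratio_rel_sum k ij; have := ratio_rel_sum k ji; rewrite rij rji.
by move=> Ei Ej; rewrite -[RHS](addr0 0) -{1}Ei -Ej; ring.
Qed.

Lemma pair_N1_pq {i j} : ratio i j = -1 -> ratio j i = -1 ->
  [/\ i != j, p j i = - p i i & q i j = (p j j)^-1].
Proof.
move=> rij rji; have [_ nji _] := ratio_pair_N1 rij rji.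
split; first exact: ratio_N1_neq rij.
  by rewrite -[p j i](divfK (p_diag_neq0 i)) -/(ratio j i) rji mulN1r.
by rewrite q_ratio rij nji; ring.
Qed.

End CartanRelations.

Lemma gen_cartan_sum_eq0 {r} {N : 'M[int]_r} {i j k} : gen_cartan N ->
  k != i -> k != j -> N i k + N j k = 0 ->
  [/\ N i k = 0, N k i = 0, N j k = 0 & N k j = 0].
Proof.
case=> _ N_offdiag N_sym ki kj /eqP.
rewrite naddr_eq0 ?N_offdiag 1?eq_sym // => /andP[/eqP Nik /eqP Njk].
by split=> //; [apply/(N_sym _ _).1 | apply/(N_sym _ _).1].
Qed.

Theorem theorem3p5 (R : realType) (r s : nat) (N : 'M[int]_r)
  (al : 'M[complex R]_(r + s, r))
  (A : comAlgType (complex R))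
  (F : 'rV[complex R]_(r + s) -> A -> A)
  (v vinv : 'I_r -> A)
  (Gp Gm : 'I_r -> 'rV[complex R]_(r + s)) :
  gen_cartan N ->
  s = (r - \rank (map_mx (fun z : int => z%:~R : complex R) N))%N ->
  row_free al^T ->
  (forall i j : 'I_r, lin_form al j (basisH (lshift s i)) = (N i j)%:~R) ->
  (forall (c : complex R) (H H' : 'rV[complex R]_(r + s)) (x : A),
      F (c *: H + H') x = c *: F H x + F H' x) ->
  (forall H, is_derivation (F H)) ->
  (forall H H' (x : A), der_bracket (F H) (F H') x = F 0 x) ->
  (forall i, v i * vinv i = 1) ->
  (forall H i, F H (v i) = lin_form al i H *: v i) ->
  let delta_p i := F (Gp i) in
  let delta_m i := F (Gm i) in
  let X_p i := der_lmul (v i) (delta_p i) in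
  let X_m i := der_lmul (vinv i) (delta_m i) in
  (forall i x, der_bracket (X_p i) (X_m i) x = F (basisH (lshift s i)) x) ->
  (forall i j, i != j -> forall x, der_bracket (X_p i) (X_m j) x = 0) ->
  let Am i j := lin_form al i (Gp j) in
  let A' i j := Am i j / Am j j in
  [/\ (forall i, Am i i != 0),
      (forall i (x : A), delta_m i x =
         (Am i i)^-1 *: (- F (basisH (lshift s i)) x + (Am i i)^-1 *: delta_p i x)),
      ((forall i j, i != j -> A' i j = 0 \/ A' i j = -1) /\
       (forall i j, A' i j + A' j i = (N j i)%:~R)),
      (forall i j, A' i j = -1 ->
         (forall k, k != j -> A' i k != -1) /\ (forall k, k != i -> A' k j != -1))
    & (forall i j, A' i j = -1 -> A' j i = -1 ->
         [/\ N i j = -2, N j i = -2,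
             (forall k, k != i -> k != j ->
                [/\ N i k = 0, N k i = 0, N j k = 0 & N k j = 0])
           & forall x : A, F (basisH (lshift s i)) x + F (basisH (lshift s j)) x = 0])].
Proof.
move=> cartan _ _ alH Flin Fder Fbr vK Fv dp dm Xp Xm br_diag br_off Am A'.
pose q k j := lin_form al k (Gm j).
have two_neq0 : 2 != 0 :> complex R by rewrite pnatr_eq0.
have n_diag i : (N i i)%:~R = 2 :> complex R by case: cartan => ->.
have rel_diag i k : (N i k)%:~R = - (Am i i * q k i) - q i i * Am k i.
  by rewrite -alH (weight_bracket_diag Flin Fder Fbr vK Fv (br_diag i)).
have rel_off i j : i != j -> forall k, Am j i * q k j + q i j * Am k i = 0.
  by move=> ij; exact: (weight_bracket_offdiag Flin Fder Fbr vK Fv (br_off i j ij)).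
have p_neq0 := p_diag_neq0 two_neq0 n_diag rel_diag.
have F_H i x : F (basisH (lshift s i)) x = F ((- Am i i) *: Gm i + (Am i i)^-1 *: Gp i) x.
  rewrite (bracket_diag_F Flin Fder Fbr vK Fv (br_diag i)) -/(q i i).
  by rewrite (q_diag two_neq0 n_diag rel_diag) opprK.
have F_off i j : i != j -> forall x, F ((- Am j i) *: Gm j + (- q i j) *: Gp i) x = 0.
  by move=> ij; exact: (bracket_offdiag_F Flin Fder Fbr vK Fv (br_off i j ij)).
split.
- exact: p_neq0.
- by move=> i x; exact: (F_solve_diag Flin (p_neq0 i) (F_H i x)).
- split; first exact: ratio_offdiag two_neq0 n_diag rel_diag rel_off.
  exact: ratio_sum two_neq0 n_diag rel_diag rel_off.
- by move=> i j /(ratio_N1_unique two_neq0 n_diag rel_diag rel_off).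
move=> i j rij rji.
have [nij nji nsum] := ratio_pair_N1 two_neq0 n_diag rel_diag rel_off rij rji.
have [ij pji qij] := pair_N1_pq two_neq0 n_diag rel_diag rel_off rij rji.
have [ji pij qji] := pair_N1_pq two_neq0 n_diag rel_diag rel_off rji rij.
split; try by apply: (@intr_inj (complex R)); rewrite ?nij ?nji.
- move=> k ki kj; apply: (gen_cartan_sum_eq0 cartan ki kj).
  by apply: (@intr_inj (complex R)); rewrite intrD nsum.
move=> x; apply: (F_pair_sum_eq0 Flin (p_neq0 i) (p_neq0 j) (F_H i x) (F_H j x)).
  by have := F_off i j ij x; rewrite pji qij opprK.
by have := F_off j i ji x; rewrite pij qji opprK.
Qed.
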